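(* Fix $m\ge1$ and consider the game for SumLoss with top-1 feedback and binary relevance, with loss matrix $L$ as in the context. Then every learner action $\sigma_i$, $i\in[m!]$, is Pareto-optimal.
   Context: Objects are $\{1,\dots,m\}$. Learner actions are the permutations $\sigma_1,\dots,\sigma_{m!}$ of $[m]$ ($\sigma(i)$ = rank of object $i$); adversary actions are the relevance vectors $r_1,\dots,r_{2^m}$ enumerating $\{0,1\}^m$. The loss matrix $L\in\mathbb{R}^{m!\times 2^m}$ has $L_{i,j}=\sum_{k=1}^m\sigma_i(k)r_j(k)$, with rows $\ell_i\in\mathbb{R}^{2^m}$. Let $\Delta=\{p\in\mathbb{R}^{2^m}:p_i\ge0,\sum_ip_i=1\}$. Action $i$ is optimal under $p\in\Delta$ if $\ell_i\cdot p\le\ell_j\cdot p$ for all $j$. The cell of action $i$ is $C_i=\{p\in\Delta: \text{action } i \text{ is optimal under } p\}$. Action $i$ is Pareto-optimal if $C_i$ is non-empty and $(2^m-1)$-dimensional. *)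

From mathcomp Require Import all_boot all_order all_algebra all_fingroup.
Set Implicit Arguments. Unset Strict Implicit. Unset Printing Implicit Defensive.
Import Order.TTheory GRing.Theory Num.Theory.
Local Open Scope ring_scope.

(* Objects are 'I_m (object k stands for k+1).  Learner actions: permutations
   s : {perm 'I_m}; the rank of object k is (s k).+1 in {1..m}.
   Adversary actions: relevance vectors r : {ffun 'I_m -> bool} (all of {0,1}^m). *)

Definition relv (m : nat) := {ffun 'I_m -> bool}.

Definition sumloss (m : nat) (s : {perm 'I_m}) (r : relv m) : nat :=
  (\sum_(k < m) (s k).+1 * r k)%N.

Definition in_simplex (R : realFieldType) (m : nat) (p : {ffun relv m -> R}) : Prop :=
  (forall r, 0 <= p r) /\ \sum_r p r = 1.

Definition exp_loss (R : realFieldType) (m : nat) (s : {perm 'I_m})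
  (p : {ffun relv m -> R}) : R :=
  \sum_r (sumloss s r)%:R * p r.

Definition cell (R : realFieldType) (m : nat) (s : {perm 'I_m})
  (p : {ffun relv m -> R}) : Prop :=
  in_simplex p /\ forall s' : {perm 'I_m}, exp_loss s p <= exp_loss s' p.

Definition aff_indep (R : realFieldType) (T : finType) (n : nat)
  (P : 'I_n -> {ffun T -> R}) : Prop :=
  forall c : 'I_n -> R,
    \sum_(j < n) c j = 0 ->
    (forall a, \sum_(j < n) c j * P j a = 0) ->
    forall j, c j = 0.

Definition has_affdim (R : realFieldType) (T : finType)
  (S : {ffun T -> R} -> Prop) (d : nat) : Prop :=
  (exists P : 'I_d.+1 -> {ffun T -> R}, (forall j, S (P j)) /\ aff_indep P) /\
  (forall P : 'I_d.+2 -> {ffun T -> R}, (forall j, S (P j)) -> ~ aff_indep P).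

Definition pareto_optimal (R : realFieldType) (m : nat) (s : {perm 'I_m}) : Prop :=
  (exists p, cell (R := R) s p) /\ has_affdim (cell (R := R) s) (2 ^ m - 1).

(* Fix a ranking s and let top_j be the set of the j objects that s ranks
   first.  Mixing the point masses at top_0, ..., top_m (weight 2 each) with a
   point mass at an arbitrary relevance vector r (weight 1) gives a
   distribution under which object k has expected relevance proportional to
   2 (m - s k) + r k.  These weights strictly decrease along s, so s sorts the
   objects by expected relevance and is optimal: the point lies in the cell
   of s.  Letting r range over {0,1}^m yields 2^m points of the cell that
   differ only in their last point mass, hence are affinely independent,
   whereas no 2^m + 1 points of the simplex are. *)

From mathcomp Require Import all_boot all_order all_algebra all_fingroup.
From mathcomp Require Import ring zify.
Set Implicit Arguments. Unset Strict Implicit. Unset Printing Implicit Defensive.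
Import Order.TTheory GRing.Theory Num.Theory.
Local Open Scope ring_scope.

Lemma sum_mul_indicator (R : nzSemiRingType) (I : finType) (F : I -> R) (c : I) :
  \sum_x F x * (x == c)%:R = F c.
Proof.
rewrite (bigD1 c) //= eqxx mulr1 big1 ?addr0 // => x /negbTE ->.
by rewrite mulr0.
Qed.

Section AffineIndependence.

Variables (R : realFieldType) (T : finType).

Lemma not_aff_indep_card_lt n (P : 'I_n -> {ffun T -> R}) :
  (#|T| < n)%N -> (forall j, \sum_x P j x = 1) -> ~ aff_indep P.
Proof.
move=> ltTn sumP1 indepP.
pose A : 'M[R]_(n, #|T|) := \matrix_(j, a) P j (enum_val a).
suff: row_free A.
  by rewrite -row_leq_rank => /leq_trans/(_ (rank_leq_col A)); rewrite leqNgt ltTn.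
apply: inj_row_free => v vA0; apply/rowP => j; rewrite mxE.
have combP0 x : \sum_i v 0 i * P i x = 0.
  transitivity ((v *m A) 0 (enum_rank x)); last by rewrite vA0 mxE.
  by rewrite mxE; apply: eq_bigr => i _; rewrite mxE enum_rankK.
apply: (indepP _ _ combP0 j).
transitivity (\sum_i v 0 i * \sum_x P i x).
  by apply: eq_bigr => i _; rewrite sumP1 mulr1.
under eq_bigr do rewrite mulr_sumr.
by rewrite exchange_big big1.
Qed.

Lemma aff_indep_shifted_indicators n (q : T -> R) (a : R) (t : 'I_n -> T)
    (P : 'I_n -> {ffun T -> R}) :
  a != 0 -> injective t -> (forall j x, P j x = q x + (x == t j)%:R * a) ->
  aff_indep P.
Proof.
move=> a_neq0 t_inj defP c sumc0 combP0 j.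
have := combP0 (t j).
under eq_bigr do rewrite defP mulrDr mulrA (inj_eq t_inj) eq_sym.
rewrite big_split /= -!mulr_suml sumc0 mul0r add0r sum_mul_indicator.
by move/eqP; rewrite mulf_eq0 (negbTE a_neq0) orbF => /eqP.
Qed.

End AffineIndependence.

Lemma sqr_add_mul_bool_ge0 (z : int) (b : bool) : 0 <= z ^+ 2 + z * b%:R.
Proof. by case: b; rewrite ?mulr0 ?addr0 ?sqr_ge0 //= mulr1; nia. Qed.

Section Ranking.

Variable m : nat.
Implicit Types s : {perm 'I_m}.

Lemma sum_perm (V : nmodType) s (F : nat -> V) :
  \sum_(k < m) F (s k) = \sum_(k < m) F k.
Proof. by rewrite [RHS](reindex_inj (@perm_inj _ s)). Qed.

Lemma sum_rank_weight_le s s' (r : relv m) :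
  (\sum_k (s k).+1 * (2 * (m - s k) + r k) <=
   \sum_k (s' k).+1 * (2 * (m - s k) + r k))%N.
Proof.
rewrite -(ler_nat int) !natr_sum -subr_ge0 -sumrB.
(* s and s' have the same sums of values and of squares, so the linear and
   quadratic correction terms below sum to zero. *)
have gap k : ((s' k).+1 * (2 * (m - s k) + r k))%N%:R
                - ((s k).+1 * (2 * (m - s k) + r k))%N%:R
   = ((s' k)%:R - (s k)%:R) ^+ 2 + ((s' k)%:R - (s k)%:R) * (r k)%:R
     + (2 * m%:R * (s' k)%:R - 2 * m%:R * (s k)%:R)
     + ((s k)%:R ^+ 2 - (s' k)%:R ^+ 2) :> int.
  by rewrite !natrM !natrD natrB ?(ltnW (ltn_ord _)) // -!natr1; ring.
rewrite (eq_bigr _ (fun k _ => gap k)) !big_split /= !sumrN.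
rewrite (sum_perm s' (fun k => 2 * m%:R * k%:R)).
rewrite (sum_perm s (fun k => 2 * m%:R * k%:R)).
rewrite (sum_perm s' (fun k => k%:R ^+ 2)) (sum_perm s (fun k => k%:R ^+ 2)).
rewrite !subrr !addr0 -big_split /=.
by apply: sumr_ge0 => k _; apply: sqr_add_mul_bool_ge0.
Qed.

Definition top_relv s (j : nat) : relv m := [ffun k => (s k < j)%N].

Lemma sum_ltn_ord x n : (\sum_(j < n.+1) (x < j))%N = (n - x)%N.
Proof.
elim: n => [|n IHn]; first by rewrite big_ord_recr big_ord0.
by rewrite big_ord_recr /= IHn; case: (ltnP x n.+1) => /=; lia.
Qed.

Lemma sum_sumloss_top_relv s s' :
  (\sum_(j < m.+1) sumloss s' (top_relv s j) = \sum_k (s' k).+1 * (m - s k))%N.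
Proof.
rewrite /sumloss exchange_big /=; apply: eq_bigr => k _.
under eq_bigr do rewrite ffunE.
by rewrite -big_distrr /= sum_ltn_ord.
Qed.

End Ranking.

Section CellWitness.

Variables (R : realFieldType) (m : nat) (s : {perm 'I_m}).

Definition cell_witness (r : relv m) : {ffun relv m -> R} :=
  [ffun x => (2 * \sum_(j < m.+1) (x == top_relv s j)%:R + (x == r)%:R)
             / (2 * m + 3)%:R].

Lemma sum_mul_cell_witness r (F : relv m -> R) :
  \sum_x F x * cell_witness r x =
  (2 * \sum_(j < m.+1) F (top_relv s j) + F r) / (2 * m + 3)%:R.
Proof.
under eq_bigr do rewrite ffunE mulrA mulrDr mulrCA mulr_sumr.
rewrite -mulr_suml big_split /= -mulr_sumr exchange_big /= sum_mul_indicator.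
by under eq_bigr do rewrite sum_mul_indicator.
Qed.

Lemma cell_witness_simplex r : in_simplex (cell_witness r).
Proof.
split=> [x|].
  by rewrite ffunE divr_ge0 ?addr_ge0 ?mulr_ge0 ?sumr_ge0.
under eq_bigr do rewrite -[cell_witness r _]mul1r.
rewrite sum_mul_cell_witness sumr_const card_ord.
rewrite -natrM natr1 (_ : (2 * m.+1).+1 = 2 * m + 3)%N; last by lia.
by rewrite divff // pnatr_eq0 addn3.
Qed.

Lemma exp_loss_cell_witness s' r :
  exp_loss s' (cell_witness r) =
  (\sum_k (s' k).+1 * (2 * (m - s k) + r k))%N%:R / (2 * m + 3)%:R.
Proof.
rewrite /exp_loss sum_mul_cell_witness -natr_sum -natrM -natrD.
rewrite sum_sumloss_top_relv /sumloss big_distrr -big_split /=.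
by congr (_%:R / _); apply: eq_bigr => k _; rewrite mulnDr mulnCA.
Qed.

Lemma cell_witness_cell r : cell s (cell_witness r).
Proof.
split=> [|s']; first exact: cell_witness_simplex.
rewrite !exp_loss_cell_witness ler_pM2r ?invr_gt0 ?ltr0n ?addn3 // ler_nat.
exact: sum_rank_weight_le.
Qed.

End CellWitness.

Lemma card_relv m : #|relv m| = (2 ^ m - 1).+1.
Proof. by rewrite card_ffun card_bool card_ord -subSn ?expn_gt0 // subn1. Qed.

Theorem lemma1 (R : realFieldType) (m : nat) (hm : (1 <= m)%N) (s : {perm 'I_m}) :
  pareto_optimal R s.
Proof.
pose t (j : 'I_(2 ^ m - 1).+1) : relv m :=
  enum_val (cast_ord (esym (card_relv m)) j).
have t_inj : injective t by move=> i j /enum_val_inj /cast_ord_inj.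
split; first by exists (cell_witness R s (t ord0)); apply: cell_witness_cell.
split.
  exists (fun j => cell_witness R s (t j)); split=> [j|].
    exact: cell_witness_cell.
  apply: (aff_indep_shifted_indicators (a := (2 * m + 3)%:R^-1) _ t_inj).
    by rewrite invr_eq0 pnatr_eq0 addn3.
  by move=> j x; rewrite ffunE mulrDl.
move=> P cellP; apply: not_aff_indep_card_lt; first by rewrite card_relv.
by move=> j; have [[_ ->]] := cellP j.
Qed.
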